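(* The local consequence relations $\vdash_{\mathcal{K}_{\omega\text{Ł}}}$ and $\vdash_{\mathcal{K}_{\text{Ł}}}$ coincide, whereas $\vdash_{4\mathcal{K}_{\omega\text{Ł}}}$ is strictly stronger than $\vdash_{4\mathcal{K}_{\text{Ł}}}$ (i.e. $\vdash_{4\mathcal{K}_{\text{Ł}}}\subsetneq\vdash_{4\mathcal{K}_{\omega\text{Ł}}}$).
   Context: $[0,1]_{\text{Ł}}$ is the standard MV-algebra on $[0,1]$ ($\wedge=\min$, $\vee=\max$, $a\cdot b=\max\{0,a+b-1\}$, $a\to b=\min\{1,1-a+b\}$); for $n\ge1$, $MV_n$ is its subalgebra on $\{0,\frac1n,\dots,1\}$. Modal formulas use $\wedge,\vee,\cdot,\to,0,1,\Box,\Diamond$. An $\mathbf{A}$-Kripke model is $\langle W,R,e\rangle$ with $W\ne\emptyset$, crisp $R\subseteq W^2$, $e$ valuing variables at worlds in $\mathbf{A}$, extended world-wise homomorphically and by $e(v,\Box\varphi)=\inf_{Rvw}e(w,\varphi)$, $e(v,\Diamond\varphi)=\sup_{Rvw}e(w,\varphi)$, these being required to exist (safe models). $\mathcal{K}_{\text{Ł}}$: all $[0,1]_{\text{Ł}}$-Kripke models; $\mathcal{K}_{\omega\text{Ł}}$: all safe Kripke models over some $MV_n$, $n\in\omega$; the prefix $4$ denotes restriction to transitive $R$. $\Gamma\vdash_{\mathcal{C}}\varphi$ (for finite $\Gamma$) means: for every model in $\mathcal{C}$ and world $v$, if all of $\Gamma$ has value $1$ at $v$ then $\varphi$ has value $1$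 at $v$. *)

From Stdlib Require Import Reals List.
From Coquelicot Require Import Coquelicot.
Open Scope R_scope.

Inductive form : Type :=
| Var : nat -> form
| And : form -> form -> form
| Or  : form -> form -> form
| Prod : form -> form -> form
| Imp : form -> form -> form
| Bot : form
| Top : form
| Box : form -> form
| Dia : form -> form.

(** Supremum / infimum in [0,1]: for a set S of reals lying in [0,1],
    [sup01 S] is sup S (and 0 = bottom of [0,1] if S is empty);
    [inf01 S] is inf S (and 1 = top of [0,1] if S is empty). *)
Definition sup01 (S : R -> Prop) : R := real (Lub_Rbar (fun x => x = 0 \/ S x)).
Definition inf01 (S : R -> Prop) : R := real (Glb_Rbar (fun x => x = 1 \/ S x)).

Definition luk_prod (a b : R) : R := Rmax 0 (a + b - 1).
Definition luk_imp (a b : R) : R := Rmin 1 (1 - a + b).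

Fixpoint eval {W : Type} (Rel : W -> W -> Prop) (e : nat -> W -> R)
    (phi : form) (v : W) : R :=
  match phi with
  | Var p => e p v
  | And a b => Rmin (eval Rel e a v) (eval Rel e b v)
  | Or a b => Rmax (eval Rel e a v) (eval Rel e b v)
  | Prod a b => luk_prod (eval Rel e a v) (eval Rel e b v)
  | Imp a b => luk_imp (eval Rel e a v) (eval Rel e b v)
  | Bot => 0
  | Top => 1
  | Box a => inf01 (fun x => exists w, Rel v w /\ x = eval Rel e a w)
  | Dia a => sup01 (fun x => exists w, Rel v w /\ x = eval Rel e a w)
  end.

Definition in_MV (n : nat) (x : R) : Prop :=
  exists k : nat, (k <= n)%nat /\ x = INR k / INR n.

Definition model_class := forall W : Type, (W -> W -> Prop) -> (nat -> W -> R) -> Prop.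

Definition transitive_rel {W : Type} (Rel : W -> W -> Prop) : Prop :=
  forall u v w, Rel u v -> Rel v w -> Rel u w.

Definition K_L : model_class :=
  fun W Rel e => forall p w, 0 <= e p w <= 1.

Definition K_omegaL : model_class :=
  fun W Rel e => exists n : nat, (1 <= n)%nat /\ forall p w, in_MV n (e p w).

Definition K4_L : model_class :=
  fun W Rel e => K_L W Rel e /\ transitive_rel Rel.

Definition K4_omegaL : model_class :=
  fun W Rel e => K_omegaL W Rel e /\ transitive_rel Rel.

Definition entails (C : model_class) (Gamma : list form) (phi : form) : Prop :=
  forall (W : Type) (Rel : W -> W -> Prop) (e : nat -> W -> R),
    C W Rel e ->
    forall v : W, (forall g, In g Gamma -> eval Rel e g v = 1) ->
      eval Rel e phi v = 1.

(* Take a [0,1]-valued countermodel to [Gamma |- phi].  For each [eps] it unravels into a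
   finite tree, of depth the modal depth and branching the number of subformulas, whose children
   are [eps]-witnesses for the boxes and diamonds; on that tree every formula is approximated
   within a fixed multiple of [eps].  Only finitely many tree shapes occur, so one shape carries
   approximate countermodels for all [eps], and by compactness of the cube an exact one.  On a
   fixed tree the truth values are piecewise-linear functions with rational coefficients of the
   values of the variables, so the countermodel conditions cut out a nonempty rational polyhedral
   region; a rational point of it is a countermodel over some MV_n.

   Over transitive frames the premises [Box (p <-> (~ Dia p -> Dia p))] make every successor
   satisfy [p = min(1, 2 Dia p)]: over MV_n a value strictly between 0 and 1 would have to be
   halved forever, so [Dia p] is crisp, whereas over [0,1] the frame (nat, <) with
   [p j = 2^-j] satisfies the premises with [Dia p = 1/2] at the root. *)

From Stdlib Require Import Reals Lra Lia List ZArith QArith Qreals.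
From Stdlib Require Import Classical ClassicalEpsilon Cantor.
From Coquelicot Require Import Coquelicot.
Open Scope R_scope.

(** * Suprema and infima in [0,1] *)

Lemma fold_Rmax_lub l b : (forall y, In y l -> y <= b) -> 0 <= b -> fold_right Rmax 0 l <= b.
Proof. induction l; simpl; intros H H0; auto. apply Rmax_lub; auto. Qed.

Lemma fold_Rmax_ub l y : In y l -> y <= fold_right Rmax 0 l.
Proof.
  induction l as [|a l IH]; simpl; [contradiction|]. intros [<-|Hy]; [apply Rmax_l|].
  eapply Rle_trans; [apply IH, Hy|apply Rmax_r].
Qed.

Lemma fold_Rmax_ge0 l : 0 <= fold_right Rmax 0 l.
Proof. induction l; simpl; [lra|]. eapply Rle_trans; [apply IHl|apply Rmax_r]. Qed.

Lemma fold_Rmin_glb l b : (forall y, In y l -> b <= y) -> b <= 1 -> b <= fold_right Rmin 1 l.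
Proof. induction l; simpl; intros H H1; auto. apply Rmin_glb; auto. Qed.

Lemma fold_Rmin_lb l y : In y l -> fold_right Rmin 1 l <= y.
Proof.
  induction l as [|a l IH]; simpl; [contradiction|]. intros [<-|Hy]; [apply Rmin_l|].
  eapply Rle_trans; [apply Rmin_r|apply IH, Hy].
Qed.

Lemma fold_Rmin_le1 l : fold_right Rmin 1 l <= 1.
Proof. induction l; simpl; [lra|]. eapply Rle_trans; [apply Rmin_r|apply IHl]. Qed.

Lemma sup01_is_lub S B :
  (forall x, S x -> x <= B) -> is_lub_Rbar (fun x => x = 0 \/ S x) (Finite (sup01 S)).
Proof.
  intros HB. unfold sup01. destruct (Lub_Rbar_correct (fun x => x = 0 \/ S x)) as [Hub Hlub].
  assert (H0 : Rbar_le 0 (Lub_Rbar (fun x => x = 0 \/ S x))) by (apply Hub; auto).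
  assert (H1 : Rbar_le (Lub_Rbar (fun x => x = 0 \/ S x)) (Rmax 0 B)).
  { apply Hlub. intros x [->|Hx]; simpl; [apply Rmax_l|].
    eapply Rle_trans; [apply HB; auto|apply Rmax_r]. }
  destruct (Lub_Rbar _) eqn:E; simpl in *; try contradiction.
  rewrite <- E. apply Lub_Rbar_correct.
Qed.

Lemma sup01_ub S B x : (forall y, S y -> y <= B) -> S x -> x <= sup01 S.
Proof. intros HB Hx. apply (proj1 (sup01_is_lub S B HB) x). auto. Qed.

Lemma sup01_ge0 S B : (forall y, S y -> y <= B) -> 0 <= sup01 S.
Proof. intros HB. apply (proj1 (sup01_is_lub S B HB) 0). auto. Qed.

Lemma sup01_le S b : (forall x, S x -> x <= b) -> 0 <= b -> sup01 S <= b.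
Proof.
  intros Hb H0. apply (proj2 (sup01_is_lub S b Hb) (Finite b)).
  intros x [->|Hx]; simpl; auto.
Qed.

Lemma sup01_approx S B eps : (forall y, S y -> y <= B) -> 0 < eps ->
  sup01 S - eps < 0 \/ exists x, S x /\ sup01 S - eps < x.
Proof.
  intros HB Heps. destruct (Rlt_dec (sup01 S - eps) 0) as [Hlt|Hge]; [left; auto|right].
  apply NNPP. intros Hno.
  enough (sup01 S <= sup01 S - eps) by lra.
  apply sup01_le; [|lra]. intros x Hx.
  destruct (Rle_dec x (sup01 S - eps)); auto. exfalso. apply Hno. exists x. split; auto. lra.
Qed.

Lemma inf01_is_glb S B :
  (forall x, S x -> B <= x) -> is_glb_Rbar (fun x => x = 1 \/ S x) (Finite (inf01 S)).
Proof.
  intros HB. unfold inf01. destruct (Glb_Rbar_correct (fun x => x = 1 \/ S x)) as [Hlb Hglb].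
  assert (H1 : Rbar_le (Glb_Rbar (fun x => x = 1 \/ S x)) 1) by (apply Hlb; auto).
  assert (H0 : Rbar_le (Rmin 1 B) (Glb_Rbar (fun x => x = 1 \/ S x))).
  { apply Hglb. intros x [->|Hx]; simpl; [apply Rmin_l|].
    eapply Rle_trans; [apply Rmin_r|apply HB; auto]. }
  destruct (Glb_Rbar _) eqn:E; simpl in *; try contradiction.
  rewrite <- E. apply Glb_Rbar_correct.
Qed.

Lemma inf01_lb S B x : (forall y, S y -> B <= y) -> S x -> inf01 S <= x.
Proof. intros HB Hx. apply (proj1 (inf01_is_glb S B HB) x). auto. Qed.

Lemma inf01_le1 S B : (forall y, S y -> B <= y) -> inf01 S <= 1.
Proof. intros HB. apply (proj1 (inf01_is_glb S B HB) 1). auto. Qed.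

Lemma inf01_ge S b : (forall x, S x -> b <= x) -> b <= 1 -> b <= inf01 S.
Proof.
  intros Hb H1. apply (proj2 (inf01_is_glb S b Hb) (Finite b)).
  intros x [->|Hx]; simpl; auto.
Qed.

Lemma inf01_approx S B eps : (forall y, S y -> B <= y) -> 0 < eps ->
  1 < inf01 S + eps \/ exists x, S x /\ x < inf01 S + eps.
Proof.
  intros HB Heps. destruct (Rlt_dec 1 (inf01 S + eps)) as [Hlt|Hge]; [left; auto|right].
  apply NNPP. intros Hno.
  enough (inf01 S + eps <= inf01 S) by lra.
  apply inf01_ge; [|lra]. intros x Hx.
  destruct (Rle_dec (inf01 S + eps) x); auto. exfalso. apply Hno. exists x. split; auto. lra.
Qed.

Lemma sup01_list S l : (forall x, S x <-> In x l) -> sup01 S = fold_right Rmax 0 l.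
Proof.
  intros HS. assert (Hub : forall x, S x -> x <= fold_right Rmax 0 l).
  { intros x Hx. apply fold_Rmax_ub, HS, Hx. }
  apply Rle_antisym.
  - apply sup01_le; [exact Hub|apply fold_Rmax_ge0].
  - apply fold_Rmax_lub; [|exact (sup01_ge0 S _ Hub)].
    intros y Hy. apply (sup01_ub S _ _ Hub), HS, Hy.
Qed.

Lemma inf01_list S l : (forall x, S x <-> In x l) -> inf01 S = fold_right Rmin 1 l.
Proof.
  intros HS. assert (Hlb : forall x, S x -> fold_right Rmin 1 l <= x).
  { intros x Hx. apply fold_Rmin_lb, HS, Hx. }
  apply Rle_antisym.
  - apply fold_Rmin_glb; [|exact (inf01_le1 S _ Hlb)].
    intros y Hy. apply (inf01_lb S _ _ Hlb), HS, Hy.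
  - apply inf01_ge; [exact Hlb|apply fold_Rmin_le1].
Qed.

(** * Kripke semantics *)

Section Semantics.

Variables (W : Type) (Rel : W -> W -> Prop) (e : nat -> W -> R).
Hypothesis e_unit : K_L W Rel e.

Lemma eval_in_unit phi v : 0 <= eval Rel e phi v <= 1.
Proof.
  revert v. induction phi; intro v; simpl;
    try (specialize (IHphi1 v); specialize (IHphi2 v));
    unfold luk_prod, luk_imp, Rmin, Rmax in *; repeat destruct Rle_dec; try lra.
  - apply e_unit.
  - split; [apply inf01_ge|apply (inf01_le1 _ 0)]; try lra; intros x [w [_ ->]]; apply IHphi.
  - split; [apply (sup01_ge0 _ 1)|apply sup01_le]; try lra; intros x [w [_ ->]]; apply IHphi.
Qed.

Lemma box_le a v u : Rel v u -> eval Rel e (Box a) v <= eval Rel e a u.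
Proof.
  intros Hvu. apply (inf01_lb _ 0); [|eauto].
  intros x [w [_ ->]]. apply eval_in_unit.
Qed.

Lemma box_ge a v b :
  (forall u, Rel v u -> b <= eval Rel e a u) -> b <= 1 -> b <= eval Rel e (Box a) v.
Proof. intros Hb Hb1. apply inf01_ge; auto. intros x [w [Hw ->]]. auto. Qed.

Lemma dia_ge a v u : Rel v u -> eval Rel e a u <= eval Rel e (Dia a) v.
Proof.
  intros Hvu. apply (sup01_ub _ 1); [|eauto].
  intros x [w [_ ->]]. apply eval_in_unit.
Qed.

Lemma dia_le a v b :
  (forall u, Rel v u -> eval Rel e a u <= b) -> 0 <= b -> eval Rel e (Dia a) v <= b.
Proof. intros Hb Hb0. apply sup01_le; auto. intros x [w [Hw ->]]. auto. Qed.

Lemma box_eq1 a v u : eval Rel e (Box a) v = 1 -> Rel v u -> eval Rel e a u = 1.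
Proof.
  intros H1 Hvu. pose proof (box_le a v u Hvu). pose proof (eval_in_unit a u). lra.
Qed.

End Semantics.

Lemma box_no_succ W (Rel : W -> W -> Prop) e a v :
  (forall u, ~ Rel v u) -> eval Rel e (Box a) v = 1.
Proof.
  intros Hv. simpl. rewrite (inf01_list _ nil); [reflexivity|].
  intros y. split; [intros [w [Hw _]]; exact (Hv w Hw)|intros []].
Qed.

Lemma dia_no_succ W (Rel : W -> W -> Prop) e a v :
  (forall u, ~ Rel v u) -> eval Rel e (Dia a) v = 0.
Proof.
  intros Hv. simpl. rewrite (sup01_list _ nil); [reflexivity|].
  intros y. split; [intros [w [Hw _]]; exact (Hv w Hw)|intros []].
Qed.

Lemma in_MV_unit n x : (1 <= n)%nat -> in_MV n x -> 0 <= x <= 1.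
Proof.
  intros Hn [k [Hk ->]]. apply le_INR in Hn, Hk. simpl in Hn.
  split; [apply Rdiv_le_0_compat; [apply pos_INR|lra]|].
  apply (Rdiv_le_1 (INR k) (INR n)); lra.
Qed.

Lemma K_omegaL_K_L W Rel e : K_omegaL W Rel e -> K_L W Rel e.
Proof. intros [n [Hn He]] p w. exact (in_MV_unit n _ Hn (He p w)). Qed.

Lemma entails_antimono (C C' : model_class) Gamma phi :
  (forall W Rel e, C W Rel e -> C' W Rel e) -> entails C' Gamma phi -> entails C Gamma phi.
Proof. intros HCC' Hent W Rel e HC. apply Hent, HCC', HC. Qed.

(** * Piecewise-linear terms and their maxima on the cube *)

Inductive term : Type :=
| TZero | TOne | TVar (i : nat)
| TAdd (a b : term) | TOpp (a : term) | TMin (a b : term) | TMax (a b : term).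

Fixpoint teval (t : term) (x : nat -> R) : R :=
  match t with
  | TZero => 0
  | TOne => 1
  | TVar i => x i
  | TAdd a b => teval a x + teval b x
  | TOpp a => - teval a x
  | TMin a b => Rmin (teval a x) (teval b x)
  | TMax a b => Rmax (teval a x) (teval b x)
  end.

Fixpoint vars (t : term) : list nat :=
  match t with
  | TZero | TOne => nil
  | TVar i => i :: nil
  | TAdd a b | TMin a b | TMax a b => vars a ++ vars b
  | TOpp a => vars a
  end.

Definition term_min (ts : list term) : term := fold_right TMin TOne ts.
Definition term_max (ts : list term) : term := fold_right TMax TZero ts.

Lemma teval_term_min ts x :
  teval (term_min ts) x = fold_right Rmin 1 (map (fun t => teval t x) ts).
Proof. induction ts; simpl; [reflexivity|]. rewrite <- IHts. reflexivity. Qed.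

Lemma teval_term_max ts x :
  teval (term_max ts) x = fold_right Rmax 0 (map (fun t => teval t x) ts).
Proof. induction ts; simpl; [reflexivity|]. rewrite <- IHts. reflexivity. Qed.

Lemma teval_ext t x y : (forall i, In i (vars t) -> x i = y i) -> teval t x = teval t y.
Proof.
  induction t; simpl; intros Hxy; auto;
    try (rewrite IHt1, IHt2; auto; intros; apply Hxy, in_or_app; auto).
  rewrite IHt; auto.
Qed.

Definition dist_on (l : list nat) (x y : nat -> R) : R :=
  fold_right (fun i acc => Rabs (x i - y i) + acc) 0 l.

Lemma dist_on_app l1 l2 x y : dist_on (l1 ++ l2) x y = dist_on l1 x y + dist_on l2 x y.
Proof. induction l1; simpl; [lra|]. unfold dist_on in *. simpl. rewrite IHl1. lra. Qed.

Lemma dist_on_ge0 l x y : 0 <= dist_on l x y.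
Proof.
  induction l; simpl; [lra|]. unfold dist_on in *. simpl.
  pose proof (Rabs_pos (x a - y a)). lra.
Qed.

Lemma dist_on_sym l x y : dist_on l x y = dist_on l y x.
Proof.
  induction l; simpl; [reflexivity|]. unfold dist_on in *. simpl.
  rewrite IHl, Rabs_minus_sym. reflexivity.
Qed.

Definition lipschitz_on (l : list nat) (f : (nat -> R) -> R) (K : R) : Prop :=
  forall x y, Rabs (f x - f y) <= K * dist_on l x y.

Lemma dist_on_agree l x y : (forall i, In i l -> x i = y i) -> dist_on l x y = 0.
Proof.
  induction l as [|a l IH]; intros Hxy; [reflexivity|]. unfold dist_on in *. simpl.
  rewrite Hxy, Rminus_diag, Rabs_R0, Rplus_0_l by (left; reflexivity).
  apply IH. intros i Hi. apply Hxy. right. exact Hi.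
Qed.

Lemma lipschitz_on_ext l f K x y :
  lipschitz_on l f K -> (forall i, In i l -> x i = y i) -> f x = f y.
Proof.
  intros Hf Hxy. specialize (Hf x y).
  rewrite (dist_on_agree l x y Hxy), Rmult_0_r in Hf.
  apply Rabs_le_between in Hf. lra.
Qed.

Lemma Rmin_lipschitz a b c d : Rabs (Rmin a b - Rmin c d) <= Rabs (a - c) + Rabs (b - d).
Proof. unfold Rmin, Rabs; repeat destruct Rle_dec; repeat destruct Rcase_abs; lra. Qed.

Lemma Rmax_lipschitz a b c d : Rabs (Rmax a b - Rmax c d) <= Rabs (a - c) + Rabs (b - d).
Proof. unfold Rmax, Rabs; repeat destruct Rle_dec; repeat destruct Rcase_abs; lra. Qed.

Lemma teval_lipschitz t : exists K, 0 <= K /\ lipschitz_on (vars t) (teval t) K.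
Proof.
  unfold lipschitz_on.
  induction t; simpl.
  - exists 0. split; [lra|]. intros. rewrite Rminus_diag, Rabs_R0. lra.
  - exists 0. split; [lra|]. intros. rewrite Rminus_diag, Rabs_R0. lra.
  - exists 1. split; [lra|]. intros. unfold dist_on. simpl. lra.
  - destruct IHt1 as [K1 [HK1 L1]], IHt2 as [K2 [HK2 L2]].
    exists (K1 + K2). split; [lra|]. intros x y. rewrite dist_on_app.
    specialize (L1 x y). specialize (L2 x y).
    pose proof (dist_on_ge0 (vars t1) x y). pose proof (dist_on_ge0 (vars t2) x y).
    pose proof (Rabs_triang (teval t1 x - teval t1 y) (teval t2 x - teval t2 y)).
    replace (teval t1 x + teval t2 x - (teval t1 y + teval t2 y))
      with (teval t1 x - teval t1 y + (teval t2 x - teval t2 y)) by ring.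
    nra.
  - destruct IHt as [K [HK L]]. exists K. split; [exact HK|]. intros x y.
    replace (- teval t x - - teval t y) with (- (teval t x - teval t y)) by ring.
    rewrite Rabs_Ropp. apply L.
  - destruct IHt1 as [K1 [HK1 L1]], IHt2 as [K2 [HK2 L2]].
    exists (K1 + K2). split; [lra|]. intros x y. rewrite dist_on_app.
    specialize (L1 x y). specialize (L2 x y).
    pose proof (dist_on_ge0 (vars t1) x y). pose proof (dist_on_ge0 (vars t2) x y).
    pose proof (Rmin_lipschitz (teval t1 x) (teval t2 x) (teval t1 y) (teval t2 y)).
    nra.
  - destruct IHt1 as [K1 [HK1 L1]], IHt2 as [K2 [HK2 L2]].
    exists (K1 + K2). split; [lra|]. intros x y. rewrite dist_on_app.
    specialize (L1 x y). specialize (L2 x y).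
    pose proof (dist_on_ge0 (vars t1) x y). pose proof (dist_on_ge0 (vars t2) x y).
    pose proof (Rmax_lipschitz (teval t1 x) (teval t2 x) (teval t1 y) (teval t2 y)).
    nra.
Qed.

Definition in_cube (l : list nat) (x : nat -> R) : Prop := forall i, In i l -> 0 <= x i <= 1.

Definition upd (x : nat -> R) (a : nat) (t : R) : nat -> R :=
  fun i => if Nat.eq_dec i a then t else x i.

Lemma dist_on_upd_same l x a t t' :
  dist_on l (upd x a t) (upd x a t') <= INR (length l) * Rabs (t - t').
Proof.
  induction l as [|b l IH]; [unfold dist_on; simpl; lra|].
  cbn [length]. rewrite S_INR. unfold dist_on in *. cbn [fold_right].
  unfold upd at 1 2. destruct Nat.eq_dec; [lra|].
  rewrite Rminus_diag, Rabs_R0. pose proof (Rabs_pos (t - t')). lra.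
Qed.

Lemma dist_on_upd_cons a l x y t : dist_on (a :: l) (upd x a t) (upd y a t) <= dist_on l x y.
Proof.
  unfold dist_on. simpl. unfold upd at 1 2. destruct Nat.eq_dec; [|congruence].
  rewrite Rminus_diag, Rabs_R0, Rplus_0_l.
  induction l as [|b l IH]; simpl; [lra|].
  unfold upd at 1 2. destruct Nat.eq_dec; [|lra].
  rewrite Rminus_diag, Rabs_R0. pose proof (Rabs_pos (x b - y b)). lra.
Qed.

Lemma lipschitz_continuity_pt (h : R -> R) C :
  0 <= C -> (forall t t', Rabs (h t - h t') <= C * Rabs (t - t')) -> forall c, continuity_pt h c.
Proof.
  intros HC Hh c eps Heps. exists (eps / (C + 1)). split; [apply Rdiv_lt_0_compat; lra|].
  intros y [_ Hy]. simpl in *. unfold Rdist in *.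
  eapply Rle_lt_trans; [apply Hh|].
  apply Rle_lt_trans with ((C + 1) * Rabs (y - c)); [pose proof (Rabs_pos (y - c)); nra|].
  apply (Rmult_lt_compat_l (C + 1)) in Hy; [|lra].
  replace ((C + 1) * (eps / (C + 1))) with eps in Hy by (field; lra). exact Hy.
Qed.

Section CubeMax.

Variables (a : nat) (l : list nat) (f : (nat -> R) -> R) (K : R).
Hypotheses (K_ge0 : 0 <= K) (f_lip : lipschitz_on (a :: l) f K).

Lemma coordinate_argmax : exists tm : (nat -> R) -> R, forall x,
  0 <= tm x <= 1 /\ forall c, 0 <= c <= 1 -> f (upd x a c) <= f (upd x a (tm x)).
Proof.
  apply (choice (fun x t =>
    0 <= t <= 1 /\ forall c, 0 <= c <= 1 -> f (upd x a c) <= f (upd x a t))).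
  intro x. destruct (continuity_ab_maj (fun t => f (upd x a t)) 0 1) as [t [Hmax Ht]]; [lra| |].
  - intros c _. apply (lipschitz_continuity_pt _ (K * INR (length (a :: l)))).
    + apply Rmult_le_pos; [exact K_ge0|apply pos_INR].
    + intros t t'. eapply Rle_trans; [apply f_lip|].
      rewrite Rmult_assoc. apply Rmult_le_compat_l; [exact K_ge0|apply dist_on_upd_same].
  - exists t. split; [exact Ht|]. intros c Hc. apply Hmax. exact Hc.
Qed.

Lemma coordinate_max_lipschitz tm :
  (forall x c, 0 <= c <= 1 -> f (upd x a c) <= f (upd x a (tm x))) ->
  (forall x, 0 <= tm x <= 1) ->
  lipschitz_on l (fun x => f (upd x a (tm x))) K.
Proof.
  intros Hmax Htm.
  assert (Hhalf : forall x y, f (upd y a (tm y)) - K * dist_on l x y <= f (upd x a (tm x))).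
  { intros x y. apply Rle_trans with (f (upd x a (tm y))); [|apply Hmax, Htm].
    pose proof (f_lip (upd x a (tm y)) (upd y a (tm y))) as H.
    pose proof (dist_on_upd_cons a l x y (tm y)).
    apply Rabs_le_between in H. nra. }
  intros x y. apply Rabs_le_between.
  pose proof (Hhalf x y) as H1. pose proof (Hhalf y x) as H2. rewrite dist_on_sym in H2. lra.
Qed.

End CubeMax.

Lemma lipschitz_argmax_on_cube l : forall f K, 0 <= K -> lipschitz_on l f K ->
  exists xs, in_cube l xs /\ forall x, in_cube l x -> f x <= f xs.
Proof.
  induction l as [|a l IH]; intros f K HK Hf.
  - exists (fun _ => 0). split; [intros i []|]. intros x _.
    right. apply (lipschitz_on_ext nil f K); auto. intros i [].
  - destruct (coordinate_argmax a l f K HK Hf) as [tm Htm].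
    assert (Hg := coordinate_max_lipschitz a l f K HK Hf tm
                    (fun x => proj2 (Htm x)) (fun x => proj1 (Htm x))).
    destruct (IH _ K HK Hg) as [xs [Hxs Hmax]].
    exists (upd xs a (tm xs)). split.
    + intros i Hi. unfold upd. destruct Nat.eq_dec; [apply Htm|].
      destruct Hi; [congruence|auto].
    + intros x Hx. apply Rle_trans with (f (upd x a (tm x))).
      * rewrite (lipschitz_on_ext _ f K x (upd x a (x a)) Hf).
        -- apply Htm, Hx. left. reflexivity.
        -- intros i _. unfold upd. destruct Nat.eq_dec; congruence.
      * apply Hmax. intros i Hi. apply Hx. right. exact Hi.
Qed.

Lemma lipschitz_sup_attained l f K : 0 <= K -> lipschitz_on l f K ->
  (forall k : nat, exists x, in_cube l x /\ 1 - / (INR k + 1) <= f x) ->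
  exists x, in_cube l x /\ 1 <= f x.
Proof.
  intros HK Hf Happrox. destruct (lipschitz_argmax_on_cube l f K HK Hf) as [xs [Hxs Hmax]].
  exists xs. split; [exact Hxs|].
  destruct (Rle_dec 1 (f xs)) as [H|H]; [exact H|exfalso].
  destruct (archimed_cor1 (1 - f xs)) as [N [HN HN0]]; [lra|].
  destruct (Happrox (N - 1)%nat) as [x [Hx Hfx]].
  replace (INR (N - 1) + 1) with (INR N) in Hfx by (rewrite minus_INR by lia; simpl; lra).
  specialize (Hmax x Hx). lra.
Qed.

(** * Rational solutions of rational linear systems *)

Record affine : Type := Affine { aff_const : Q; aff_coef : nat -> Q }.

Fixpoint sum_below (n : nat) (g : nat -> R) : R :=
  match n with O => 0 | S n' => sum_below n' g + g n' end.

Definition aeval (n : nat) (f : affine) (x : nat -> R) : R :=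
  Q2R (aff_const f) + sum_below n (fun i => Q2R (aff_coef f i) * x i).

Definition sat (n : nat) (c : affine * bool) (x : nat -> R) : Prop :=
  if snd c then aeval n (fst c) x = 0 else 0 < aeval n (fst c) x.

Lemma Q2R_0 : Q2R 0 = 0.
Proof. unfold Q2R. simpl. lra. Qed.

Lemma Q2R_1 : Q2R 1 = 1.
Proof. unfold Q2R. simpl. lra. Qed.

Lemma sum_below_ext n g h : (forall i, (i < n)%nat -> g i = h i) -> sum_below n g = sum_below n h.
Proof. induction n; simpl; intros H; auto. rewrite IHn, H; auto. Qed.

Lemma sum_below_add n g h : sum_below n (fun i => g i + h i) = sum_below n g + sum_below n h.
Proof. induction n; simpl; [lra|]. rewrite IHn. lra. Qed.

Lemma sum_below_scale n c g : sum_below n (fun i => c * g i) = c * sum_below n g.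
Proof. induction n; simpl; [lra|]. rewrite IHn. lra. Qed.

Lemma sum_below_zero n g : (forall i, (i < n)%nat -> g i = 0) -> sum_below n g = 0.
Proof. induction n; simpl; intros H; auto. rewrite IHn, H; auto. lra. Qed.

Lemma aeval_ext n f x y : (forall i, (i < n)%nat -> x i = y i) -> aeval n f x = aeval n f y.
Proof. intros H. unfold aeval. f_equal. apply sum_below_ext. intros i Hi. rewrite H; auto. Qed.

Definition rational_below (n : nat) (x : nat -> R) : Prop :=
  forall i, (i < n)%nat -> exists q, x i = Q2R q.

Lemma aeval_rational n f x : rational_below n x -> exists q, aeval n f x = Q2R q.
Proof.
  intros Hx. unfold aeval.
  assert (Hsum : exists q, sum_below n (fun i => Q2R (aff_coef f i) * x i) = Q2R q).
  { induction n; simpl.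
    - exists 0%Q. rewrite Q2R_0. reflexivity.
    - destruct IHn as [q1 H1]; [intros i Hi; apply Hx; lia|].
      destruct (Hx n) as [q2 H2]; [lia|].
      exists (q1 + aff_coef f n * q2)%Q. rewrite Q2R_plus, Q2R_mult, H1, H2. reflexivity. }
  destruct Hsum as [q Hq]. exists (aff_const f + q)%Q. rewrite Q2R_plus, Hq. reflexivity.
Qed.

Lemma Q_dense y delta : 0 < delta -> exists q : Q, Rabs (Q2R q - y) < delta.
Proof.
  intros Hdelta. destruct (archimed_cor1 delta Hdelta) as [N [HN HN0]].
  assert (HNR : 0 < INR N) by (apply lt_0_INR; exact HN0).
  assert (Hp : IZR (Zpos (Pos.of_nat N)) = INR N).
  { rewrite <- positive_nat_Z, <- INR_IZR_INZ, Nat2Pos.id by lia. reflexivity. }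
  destruct (archimed (y * INR N)) as [Hup1 Hup2].
  exists (Qmake (up (y * INR N)) (Pos.of_nat N)). unfold Q2R. simpl. rewrite Hp.
  replace (IZR (up (y * INR N)) * / INR N - y)
    with ((IZR (up (y * INR N)) - y * INR N) * / INR N) by (field; lra).
  pose proof (Rinv_0_lt_compat _ HNR).
  apply Rabs_def1; nra.
Qed.

Definition aff_subst (n : nat) (f g : affine) : affine :=
  Affine (aff_const f + aff_coef f n * aff_const g)%Q
         (fun j => aff_coef f j + aff_coef f n * aff_coef g j)%Q.

Lemma aeval_subst n f g x : x n = aeval n g x -> aeval (S n) f x = aeval n (aff_subst n f g) x.
Proof.
  intros Hxn. unfold aeval, aff_subst. simpl. rewrite Q2R_plus, Q2R_mult.
  rewrite (sum_below_ext n (fun i => Q2R (aff_coef f i + aff_coef f n * aff_coef g i) * x i)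
    (fun i => Q2R (aff_coef f i) * x i + Q2R (aff_coef f n) * (Q2R (aff_coef g i) * x i))).
  - rewrite sum_below_add, sum_below_scale, Hxn. unfold aeval. ring.
  - intros i _. rewrite Q2R_plus, Q2R_mult. ring.
Qed.

Lemma aeval_upd_last n f x r :
  aeval (S n) f (upd x n r) = aeval (S n) f x + Q2R (aff_coef f n) * (r - x n).
Proof.
  unfold aeval. simpl.
  rewrite (sum_below_ext n _ (fun i => Q2R (aff_coef f i) * x i)).
  - unfold upd. destruct Nat.eq_dec; [ring|congruence].
  - intros i Hi. unfold upd. destruct Nat.eq_dec; [lia|reflexivity].
Qed.

Definition solve_last (n : nat) (f : affine) : affine :=
  Affine (- aff_const f / aff_coef f n)%Q (fun j => - aff_coef f j / aff_coef f n)%Q.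

Lemma solve_last_spec n f x :
  ~ (aff_coef f n == 0)%Q -> aeval (S n) f x = 0 -> x n = aeval n (solve_last n f) x.
Proof.
  intros Ha Hf. assert (Ha' : Q2R (aff_coef f n) <> 0).
  { intros H. apply Ha, eqR_Qeq. rewrite H, Q2R_0. reflexivity. }
  unfold aeval, solve_last in *. simpl in *.
  rewrite Q2R_div, Q2R_opp by exact Ha.
  rewrite (sum_below_ext n _ (fun i => (- / Q2R (aff_coef f n)) * (Q2R (aff_coef f i) * x i))).
  - rewrite sum_below_scale. apply (Rmult_eq_reg_l (Q2R (aff_coef f n))); [|exact Ha'].
    field_simplify; [|exact Ha']. lra.
  - intros i _. rewrite Q2R_div, Q2R_opp by exact Ha. field. exact Ha'.
Qed.

Lemma strict_margin n cs x : exists delta, 0 < delta /\ forall f, In (f, false) cs ->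
  delta * (Rabs (Q2R (aff_coef f n)) + 1) <= aeval (S n) f x \/ aeval (S n) f x <= 0.
Proof.
  induction cs as [|[f b] cs IH].
  - exists 1. split; [lra|]. intros f [].
  - destruct IH as [delta [Hdelta Hcs]].
    set (w := Rabs (Q2R (aff_coef f n)) + 1).
    assert (Hw : 0 < w) by (pose proof (Rabs_pos (Q2R (aff_coef f n))); unfold w; lra).
    destruct (Rle_dec (aeval (S n) f x) 0) as [Hle|Hgt].
    + exists delta. split; [exact Hdelta|]. intros g [E|E]; [|auto].
      injection E as <- _. right. exact Hle.
    + exists (Rmin delta (aeval (S n) f x / w)). split.
      { apply Rmin_glb_lt; [exact Hdelta|apply Rdiv_lt_0_compat; lra]. }
      intros g [E|E].
      * injection E as <- _. left. fold w.
        apply Rle_trans with (aeval (S n) f x / w * w); [|right; field; lra].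
        apply Rmult_le_compat_r; [lra|apply Rmin_r].
      * destruct (Hcs g E) as [H|H]; [left|right; exact H].
        pose proof (Rabs_pos (Q2R (aff_coef g n))).
        eapply Rle_trans; [|exact H]. apply Rmult_le_compat_r; [lra|apply Rmin_l].
Qed.

Lemma perturb_last n cs x :
  (forall f, In (f, true) cs -> (aff_coef f n == 0)%Q) ->
  (forall c, In c cs -> sat (S n) c x) ->
  exists r, forall c, In c cs -> sat (S n) c (upd x n (Q2R r)).
Proof.
  intros Heq Hx. destruct (strict_margin n cs x) as [delta [Hdelta Hmargin]].
  destruct (Q_dense (x n) delta Hdelta) as [r Hr].
  exists r. intros [f b] Hc. specialize (Hx _ Hc). unfold sat in *. simpl in *.
  rewrite aeval_upd_last. destruct b.
  - rewrite (Qeq_eqR _ _ (Heq f Hc)), Q2R_0. lra.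
  - destruct (Hmargin f Hc) as [H|H]; [|lra].
    assert (Rabs (Q2R (aff_coef f n) * (Q2R r - x n)) < delta * (Rabs (Q2R (aff_coef f n)) + 1)).
    { rewrite Rabs_mult. pose proof (Rabs_pos (Q2R (aff_coef f n))).
      pose proof (Rabs_pos (Q2R r - x n)). nra. }
    apply Rabs_def2 in H0. lra.
Qed.

Lemma eliminate_last n cs x : (forall c, In c cs -> sat (S n) c x) ->
  exists g x1, x1 n = aeval n g x1 /\ forall c, In c cs -> sat (S n) c x1.
Proof.
  intros Hx.
  destruct (classic (exists f, In (f, true) cs /\ ~ (aff_coef f n == 0)%Q)) as [[f [Hf Ha]]|Hno].
  - exists (solve_last n f), x. split; [|exact Hx].
    apply solve_last_spec; [exact Ha|apply (Hx _ Hf)].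
  - destruct (perturb_last n cs x) as [r Hr]; [|exact Hx|].
    { intros f Hf. apply NNPP. intros Ha. apply Hno. exists f. auto. }
    exists (Affine r (fun _ => 0%Q)), (upd x n (Q2R r)). split; [|exact Hr].
    unfold aeval. simpl. rewrite sum_below_zero.
    + unfold upd. destruct Nat.eq_dec; [lra|congruence].
    + intros i _. rewrite Q2R_0. ring.
Qed.

(* Eliminate the variables from the last one down: solve an equation for the variable if some
   equation involves it, otherwise move it to a nearby rational value. *)
Lemma rational_solution n : forall cs x, (forall c, In c cs -> sat n c x) ->
  exists y, rational_below n y /\ forall c, In c cs -> sat n c y.
Proof.
  induction n as [|n IH]; intros cs x Hx.
  - exists x. split; [intros i Hi; lia|exact Hx].
  - destruct (eliminate_last n cs x Hx) as [g [x1 [Hx1 Hcs1]]].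
    set (cs' := map (fun c => (aff_subst n (fst c) g, snd c)) cs).
    destruct (IH cs' x1) as [y [Hy Hcs']].
    { intros c Hc. apply in_map_iff in Hc. destruct Hc as [[f b] [<- Hc]].
      specialize (Hcs1 _ Hc). unfold sat in *. simpl in *. rewrite <- aeval_subst; auto. }
    exists (upd y n (aeval n g y)). split.
    + intros i Hi. unfold upd. destruct Nat.eq_dec; [apply aeval_rational; auto|apply Hy; lia].
    + intros [f b] Hc.
      assert (Hc' : In (aff_subst n f g, b) cs')
        by (apply in_map_iff; exists (f, b); auto).
      specialize (Hcs' _ Hc'). unfold sat in *. simpl in *.
      assert (Hagree : forall i, (i < n)%nat -> upd y n (aeval n g y) i = y i).
      { intros i Hi. unfold upd. destruct Nat.eq_dec; [lia|reflexivity]. }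
      rewrite (aeval_subst n f g).
      * rewrite (aeval_ext n _ _ y Hagree). exact Hcs'.
      * rewrite (aeval_ext n g _ y Hagree). unfold upd.
        destruct Nat.eq_dec; [reflexivity|congruence].
Qed.

Definition aff_cst (q : Q) : affine := Affine q (fun _ => 0%Q).
Definition aff_var (i : nat) : affine := Affine 0 (fun j => if Nat.eqb j i then 1 else 0)%Q.
Definition aff_add (f g : affine) : affine :=
  Affine (aff_const f + aff_const g)%Q (fun j => aff_coef f j + aff_coef g j)%Q.
Definition aff_opp (f : affine) : affine := Affine (- aff_const f)%Q (fun j => - aff_coef f j)%Q.
Definition aff_sub (f g : affine) : affine := aff_add f (aff_opp g).

Lemma aeval_cst n q x : aeval n (aff_cst q) x = Q2R q.
Proof.
  unfold aeval. simpl. rewrite sum_below_zero; [ring|].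
  intros i _. rewrite Q2R_0. ring.
Qed.

Lemma aeval_add n f g x : aeval n (aff_add f g) x = aeval n f x + aeval n g x.
Proof.
  unfold aeval. simpl. rewrite Q2R_plus.
  rewrite (sum_below_ext n _ (fun i => Q2R (aff_coef f i) * x i + Q2R (aff_coef g i) * x i)).
  - rewrite sum_below_add. ring.
  - intros i _. rewrite Q2R_plus. ring.
Qed.

Lemma aeval_opp n f x : aeval n (aff_opp f) x = - aeval n f x.
Proof.
  unfold aeval. simpl. rewrite Q2R_opp.
  rewrite (sum_below_ext n _ (fun i => -1 * (Q2R (aff_coef f i) * x i))).
  - rewrite sum_below_scale. ring.
  - intros i _. rewrite Q2R_opp. ring.
Qed.

Lemma aeval_sub n f g x : aeval n (aff_sub f g) x = aeval n f x - aeval n g x.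
Proof. unfold aff_sub. rewrite aeval_add, aeval_opp. ring. Qed.

Lemma aeval_var n i x : (i < n)%nat -> aeval n (aff_var i) x = x i.
Proof.
  intros Hi. unfold aeval. simpl. rewrite Q2R_0, Rplus_0_l.
  induction n as [|n IH]; simpl; [lia|].
  destruct (Nat.eq_dec i n) as [->|Hne].
  - rewrite Nat.eqb_refl, Q2R_1, sum_below_zero; [ring|].
    intros j Hj. destruct (Nat.eqb_spec j n); [lia|]. rewrite Q2R_0. ring.
  - rewrite IH by lia. destruct (Nat.eqb_spec n i); [lia|]. rewrite Q2R_0. ring.
Qed.

(* The constraint [f >= 0], split as an equation or a strict inequality according to [x]. *)
Definition nonneg_at (n : nat) (f : affine) (x : nat -> R) : affine * bool :=
  (f, if Req_EM_T (aeval n f x) 0 then true else false).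

Lemma sat_nonneg_at n f x : 0 <= aeval n f x -> sat n (nonneg_at n f x) x.
Proof. intros H. unfold nonneg_at, sat. simpl. destruct Req_EM_T; simpl; lra. Qed.

Lemma nonneg_of_sat n f x y : sat n (nonneg_at n f x) y -> 0 <= aeval n f y.
Proof. unfold nonneg_at, sat. simpl. destruct Req_EM_T; simpl; lra. Qed.

(* The affine piece of [t] active at [x], and the constraints that delimit its region. *)
Fixpoint lin (x : nat -> R) (t : term) : affine :=
  match t with
  | TZero => aff_cst 0
  | TOne => aff_cst 1
  | TVar i => aff_var i
  | TAdd a b => aff_add (lin x a) (lin x b)
  | TOpp a => aff_opp (lin x a)
  | TMin a b => if Rle_dec (teval a x) (teval b x) then lin x a else lin x b
  | TMax a b => if Rle_dec (teval a x) (teval b x) then lin x b else lin x a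
  end.

Fixpoint region (n : nat) (x : nat -> R) (t : term) : list (affine * bool) :=
  match t with
  | TZero | TOne | TVar _ => nil
  | TAdd a b => region n x a ++ region n x b
  | TOpp a => region n x a
  | TMin a b | TMax a b =>
      (if Rle_dec (teval a x) (teval b x)
       then nonneg_at n (aff_sub (lin x b) (lin x a)) x
       else nonneg_at n (aff_sub (lin x a) (lin x b)) x) :: region n x a ++ region n x b
  end.

Definition vars_below (n : nat) (t : term) : Prop := forall i, In i (vars t) -> (i < n)%nat.

Lemma vars_below_app n t1 t2 :
  (forall i, In i (vars t1 ++ vars t2) -> (i < n)%nat) -> vars_below n t1 /\ vars_below n t2.
Proof. intros H. split; intros i Hi; apply H, in_or_app; auto. Qed.

Lemma aeval_lin n x t : vars_below n t -> aeval n (lin x t) x = teval t x.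
Proof.
  unfold vars_below. induction t; simpl; intros Hv;
    try (destruct (vars_below_app n t1 t2 Hv) as [Hv1 Hv2]).
  - rewrite aeval_cst. apply Q2R_0.
  - rewrite aeval_cst. apply Q2R_1.
  - apply aeval_var, Hv. left. reflexivity.
  - rewrite aeval_add, IHt1, IHt2 by assumption. reflexivity.
  - rewrite aeval_opp, IHt by assumption. reflexivity.
  - destruct Rle_dec; [rewrite IHt1, Rmin_left|rewrite IHt2, Rmin_right]; auto; lra.
  - destruct Rle_dec; [rewrite IHt2, Rmax_right|rewrite IHt1, Rmax_left]; auto; lra.
Qed.

Lemma sat_region n x t : vars_below n t -> forall c, In c (region n x t) -> sat n c x.
Proof.
  unfold vars_below. induction t; simpl; intros Hv c Hc;
    try (destruct (vars_below_app n t1 t2 Hv) as [Hv1 Hv2]); try contradiction.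
  - apply in_app_or in Hc. destruct Hc; auto.
  - auto.
  - destruct Hc as [<-|Hc]; [|apply in_app_or in Hc; destruct Hc; auto].
    destruct Rle_dec; apply sat_nonneg_at; rewrite aeval_sub, !aeval_lin by assumption; lra.
  - destruct Hc as [<-|Hc]; [|apply in_app_or in Hc; destruct Hc; auto].
    destruct Rle_dec; apply sat_nonneg_at; rewrite aeval_sub, !aeval_lin by assumption; lra.
Qed.

Lemma teval_lin n x t y :
  vars_below n t -> (forall c, In c (region n x t) -> sat n c y) ->
  teval t y = aeval n (lin x t) y.
Proof.
  unfold vars_below. induction t; simpl; intros Hv Hy;
    try (destruct (vars_below_app n t1 t2 Hv) as [Hv1 Hv2]);
    try (assert (Hy1 : forall c, In c (region n x t1) -> sat n c y)
           by (intros; apply Hy; try right; apply in_or_app; auto);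
         assert (Hy2 : forall c, In c (region n x t2) -> sat n c y)
           by (intros; apply Hy; try right; apply in_or_app; auto)).
  - rewrite aeval_cst, Q2R_0. reflexivity.
  - rewrite aeval_cst, Q2R_1. reflexivity.
  - rewrite aeval_var; auto.
  - rewrite aeval_add, IHt1, IHt2; auto.
  - rewrite aeval_opp, IHt; auto.
  - pose proof (Hy _ (or_introl eq_refl)) as Hpiece.
    rewrite IHt1, IHt2 by assumption.
    destruct Rle_dec; apply nonneg_of_sat in Hpiece; rewrite aeval_sub in Hpiece;
      [apply Rmin_left|apply Rmin_right]; lra.
  - pose proof (Hy _ (or_introl eq_refl)) as Hpiece.
    rewrite IHt1, IHt2 by assumption.
    destruct Rle_dec; apply nonneg_of_sat in Hpiece; rewrite aeval_sub in Hpiece;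
      [apply Rmax_right|apply Rmax_left]; lra.
Qed.

Lemma in_MV_mul n m r : (1 <= m)%nat -> in_MV n r -> in_MV (n * m) r.
Proof.
  intros Hm [k [Hk ->]]. exists (k * m)%nat. split; [nia|].
  rewrite !mult_INR. destruct (Nat.eq_dec n 0) as [->|Hn].
  - simpl. unfold Rdiv. rewrite Rmult_0_l, Rinv_0. ring.
  - assert (0 < INR n) by (apply lt_0_INR; lia).
    assert (0 < INR m) by (apply lt_0_INR; lia). field. lra.
Qed.

Lemma Q_in_MV q : 0 <= Q2R q <= 1 -> in_MV (Pos.to_nat (Qden q)) (Q2R q).
Proof.
  destruct q as [z p]. unfold Q2R. simpl. intros [H0 H1].
  assert (HP : 0 < IZR (Zpos p)) by (apply IZR_lt; lia).
  assert (Hz0 : (0 <= z)%Z).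
  { apply le_IZR. apply Rmult_le_reg_r with (/ IZR (Zpos p)); [apply Rinv_0_lt_compat|]; lra. }
  assert (Hzp : (z <= Zpos p)%Z).
  { apply le_IZR. apply Rmult_le_reg_r with (/ IZR (Zpos p)); [apply Rinv_0_lt_compat; lra|].
    rewrite Rinv_r; lra. }
  exists (Z.to_nat z). split; [lia|].
  rewrite !INR_IZR_INZ, Z2Nat.id, positive_nat_Z by exact Hz0. reflexivity.
Qed.

Lemma common_denominator N x : rational_below N x -> (forall i, (i < N)%nat -> 0 <= x i <= 1) ->
  exists n, (1 <= n)%nat /\ forall i, (i < N)%nat -> in_MV n (x i).
Proof.
  induction N as [|N IH]; intros Hrat Hunit.
  - exists 1%nat. split; [lia|]. intros i Hi. lia.
  - destruct IH as [n [Hn HMV]]; [intros i Hi; apply Hrat; lia|intros i Hi; apply Hunit; lia|].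
    destruct (Hrat N) as [q Hq]; [lia|].
    exists (n * Pos.to_nat (Qden q))%nat. split; [nia|].
    intros i Hi. destruct (Nat.eq_dec i N) as [->|Hne].
    + rewrite Nat.mul_comm, Hq. apply in_MV_mul; [lia|].
      apply Q_in_MV. rewrite <- Hq. apply Hunit. lia.
    + apply in_MV_mul; [lia|]. apply HMV. lia.
Qed.

Definition tsat (c : term * bool) (x : nat -> R) : Prop :=
  if snd c then teval (fst c) x = 0 else 0 < teval (fst c) x.

Definition unit_cube_constraints (N : nat) (x : nat -> R) : list (affine * bool) :=
  flat_map (fun i => nonneg_at N (aff_var i) x
                     :: nonneg_at N (aff_sub (aff_cst 1) (aff_var i)) x :: nil)
    (seq 0 N).

Lemma sat_unit_cube_constraints N x :
  (forall i, 0 <= x i <= 1) -> forall c, In c (unit_cube_constraints N x) -> sat N c x.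
Proof.
  intros Hx c Hc. apply in_flat_map in Hc. destruct Hc as [i [Hi Hc]]. apply in_seq in Hi.
  specialize (Hx i).
  destruct Hc as [<-|[<-|[]]]; apply sat_nonneg_at;
    rewrite ?aeval_sub, ?aeval_cst, ?Q2R_1, aeval_var by lia; lra.
Qed.

Lemma unit_cube_of_constraints N x y :
  (forall c, In c (unit_cube_constraints N x) -> sat N c y) ->
  forall i, (i < N)%nat -> 0 <= y i <= 1.
Proof.
  intros Hy i Hi.
  assert (Hin : forall f, In f (nonneg_at N (aff_var i) x
                                :: nonneg_at N (aff_sub (aff_cst 1) (aff_var i)) x :: nil) ->
                          In f (unit_cube_constraints N x)).
  { intros f Hf. apply in_flat_map. exists i. split; [apply in_seq; lia|exact Hf]. }
  pose proof (nonneg_of_sat _ _ _ _ (Hy _ (Hin _ (or_introl eq_refl)))) as H0.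
  pose proof (nonneg_of_sat _ _ _ _ (Hy _ (Hin _ (or_intror (or_introl eq_refl))))) as H1.
  rewrite aeval_var in H0 by exact Hi.
  rewrite aeval_sub, aeval_cst, Q2R_1, aeval_var in H1 by exact Hi. lra.
Qed.

Lemma le_list_max l i : In i l -> (i <= list_max l)%nat.
Proof.
  intros Hi. pose proof (proj1 (list_max_le l (list_max l)) (le_n _)) as H.
  rewrite Forall_forall in H. auto.
Qed.

Lemma le_list_sum l a : In a l -> (a <= list_sum l)%nat.
Proof.
  induction l as [|b l IH]; simpl; [contradiction|].
  intros [->|Ha]; [lia|]. specialize (IH Ha). lia.
Qed.

(* Linearize around the real solution, then take a rational point of that linear region. *)
Lemma term_system_MV_solution cs x :
  (forall i, 0 <= x i <= 1) -> (forall c, In c cs -> tsat c x) ->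
  exists n, (1 <= n)%nat /\ exists y, (forall i, in_MV n (y i)) /\ forall c, In c cs -> tsat c y.
Proof.
  intros Hx Hcs.
  set (N := S (list_max (flat_map (fun c => vars (fst c)) cs))).
  assert (HN : forall c, In c cs -> vars_below N (fst c)).
  { intros c Hc i Hi. unfold N. apply Nat.lt_succ_r, le_list_max, in_flat_map. eauto. }
  set (lcs := map (fun c => (lin x (fst c), snd c)) cs
              ++ flat_map (fun c => region N x (fst c)) cs ++ unit_cube_constraints N x).
  destruct (rational_solution N lcs x) as [y [Hrat Hy]].
  { intros c Hc. apply in_app_or in Hc. destruct Hc as [Hc|Hc].
    - apply in_map_iff in Hc. destruct Hc as [[t b] [<- Hc]].
      specialize (Hcs _ Hc). unfold sat, tsat in *. simpl in *.
      rewrite aeval_lin by exact (HN _ Hc). exact Hcs.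
    - apply in_app_or in Hc. destruct Hc as [Hc|Hc]; [|apply sat_unit_cube_constraints; auto].
      apply in_flat_map in Hc. destruct Hc as [c' [Hc' Hc]]. eapply sat_region; eauto. }
  assert (Hregion : forall c, In c cs -> forall c', In c' (region N x (fst c)) -> sat N c' y).
  { intros c Hc c' Hc'. apply Hy, in_or_app. right. apply in_or_app. left.
    apply in_flat_map. eauto. }
  assert (Hunit : forall i, (i < N)%nat -> 0 <= y i <= 1).
  { apply (unit_cube_of_constraints N x). intros c Hc. apply Hy, in_or_app. right.
    apply in_or_app. right. exact Hc. }
  destruct (common_denominator N y Hrat Hunit) as [n [Hn HMV]].
  set (y' := fun i => if Nat.ltb i N then y i else 0).
  exists n. split; [exact Hn|]. exists y'. split.
  - intros i. unfold y'. destruct (Nat.ltb_spec i N) as [Hi|Hi]; [apply HMV, Hi|].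
    exists 0%nat. split; [lia|]. simpl. unfold Rdiv. ring.
  - intros [t b] Hc. pose proof (HN _ Hc) as Hvt. simpl in Hvt.
    assert (Hteval : teval t y' = aeval N (lin x t) y).
    { rewrite <- (teval_lin N x t y Hvt (Hregion _ Hc)).
      apply teval_ext. intros i Hi. unfold y'.
      rewrite (proj2 (Nat.ltb_lt i N)) by (apply Hvt, Hi). reflexivity. }
    assert (Hlin : In (lin x t, b) lcs)
      by (apply in_or_app; left; apply in_map_iff; exists (t, b); auto).
    specialize (Hy _ Hlin). unfold sat, tsat in *. simpl in *. rewrite Hteval. exact Hy.
Qed.

(** * Finite tree unravellings *)

Fixpoint encode_list (s : list nat) : nat :=
  match s with nil => 0%nat | a :: s' => S (Cantor.to_nat (a, encode_list s')) end.

Definition code (s : list nat) (p : nat) : nat := Cantor.to_nat (encode_list s, p).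

Lemma encode_list_inj s t : encode_list s = encode_list t -> s = t.
Proof.
  revert t. induction s as [|a s IH]; intros [|b t]; cbn [encode_list]; intros H;
    try discriminate; auto.
  apply Nat.succ_inj, Cantor.to_nat_inj in H. injection H as -> H. f_equal. apply IH, H.
Qed.

Lemma code_inj s p t q : code s p = code t q -> s = t /\ p = q.
Proof.
  unfold code. intros H. apply Cantor.to_nat_inj in H. injection H as Hs ->.
  split; [apply encode_list_inj, Hs|reflexivity].
Qed.

Lemma extend_along_injective {A : Type} (c : A -> nat) (f : A -> R) :
  (forall a b, c a = c b -> a = b) -> (forall a, 0 <= f a <= 1) ->
  exists x : nat -> R, (forall a, x (c a) = f a) /\ forall i, 0 <= x i <= 1.
Proof.
  intros Hinj Hf.
  destruct (choice (fun i r => (forall a, c a = i -> r = f a) /\ 0 <= r <= 1)) as [x Hx].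
  - intros i. destruct (classic (exists a, c a = i)) as [[a Ha]|Hno].
    + exists (f a). split; [|apply Hf]. intros b Hb. f_equal. apply Hinj. congruence.
    + exists 0. split; [|lra]. intros a Ha. exfalso. eauto.
  - exists x. split; [intros a; apply (proj1 (Hx (c a))); reflexivity|intros i; apply Hx].
Qed.

(* The tree of depth [d] and branching [m] whose nodes are lists of child indices (the root is
   [nil]); the node [s] is expanded exactly when [P s] holds. *)
Definition kids (d m : nat) (P : list nat -> bool) (s : list nat) : list nat :=
  if Nat.ltb (length s) d && P s then seq 0 m else nil.

Definition tree_rel (d m : nat) (P : list nat -> bool) (s t : list nat) : Prop :=
  exists i, In i (kids d m P s) /\ t = i :: s.

Definition tree_val (x : nat -> R) (p : nat) (s : list nat) : R := x (code s p).

Fixpoint tree_term (d m : nat) (P : list nat -> bool) (phi : form) (s : list nat) : term :=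
  match phi with
  | Var p => TVar (code s p)
  | And a b => TMin (tree_term d m P a s) (tree_term d m P b s)
  | Or a b => TMax (tree_term d m P a s) (tree_term d m P b s)
  | Prod a b => TMax TZero (TAdd (TAdd (tree_term d m P a s) (tree_term d m P b s)) (TOpp TOne))
  | Imp a b => TMin TOne (TAdd (TAdd TOne (TOpp (tree_term d m P a s))) (tree_term d m P b s))
  | Bot => TZero
  | Top => TOne
  | Box a => term_min (map (fun i => tree_term d m P a (i :: s)) (kids d m P s))
  | Dia a => term_max (map (fun i => tree_term d m P a (i :: s)) (kids d m P s))
  end.

Lemma eval_tree d m P x phi s :
  eval (tree_rel d m P) (tree_val x) phi s = teval (tree_term d m P phi s) x.
Proof.
  revert s. induction phi; intro s; simpl; auto;
    try (rewrite IHphi1, IHphi2; unfold luk_prod, luk_imp, Rminus; reflexivity).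
  - rewrite teval_term_min, map_map. apply inf01_list. intros y. rewrite in_map_iff. split.
    + intros [w [[i [Hi ->]] ->]]. exists i. rewrite IHphi. auto.
    + intros [i [<- Hi]]. exists (i :: s). rewrite IHphi. split; [exists i|]; auto.
  - rewrite teval_term_max, map_map. apply sup01_list. intros y. rewrite in_map_iff. split.
    + intros [w [[i [Hi ->]] ->]]. exists i. rewrite IHphi. auto.
    + intros [i [<- Hi]]. exists (i :: s). rewrite IHphi. split; [exists i|]; auto.
Qed.

Definition small_node (d m : nat) (t : list nat) : Prop :=
  (length t < d)%nat /\ List.Forall (fun j => (j < m)%nat) t.

Lemma tree_term_agree d m P P' :
  (forall t, small_node d m t -> P t = P' t) ->
  forall phi s, List.Forall (fun j => (j < m)%nat) s ->
  tree_term d m P phi s = tree_term d m P' phi s.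
Proof.
  intros Hagree phi. induction phi; intros s Hs; simpl; try reflexivity;
    try (rewrite IHphi1, IHphi2 by exact Hs; reflexivity).
  - assert (Hk : kids d m P s = kids d m P' s).
    { unfold kids. destruct (Nat.ltb_spec (length s) d); [|reflexivity].
      rewrite Hagree by (split; assumption). reflexivity. }
    rewrite Hk. f_equal. apply map_ext_in. intros i Hi. apply IHphi. constructor; [|exact Hs].
    unfold kids in Hi. destruct (_ && _); [apply in_seq in Hi; lia|destruct Hi].
  - assert (Hk : kids d m P s = kids d m P' s).
    { unfold kids. destruct (Nat.ltb_spec (length s) d); [|reflexivity].
      rewrite Hagree by (split; assumption). reflexivity. }
    rewrite Hk. f_equal. apply map_ext_in. intros i Hi. apply IHphi. constructor; [|exact Hs].
    unfold kids in Hi. destruct (_ && _); [apply in_seq in Hi; lia|destruct Hi].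
Qed.

Fixpoint nodes_upto (m k : nat) : list (list nat) :=
  match k with
  | O => nil :: nil
  | S k' => nil :: flat_map (fun t => map (fun i => i :: t) (seq 0 m)) (nodes_upto m k')
  end.

Lemma in_nodes_upto m k t :
  (length t <= k)%nat -> List.Forall (fun j => (j < m)%nat) t -> In t (nodes_upto m k).
Proof.
  revert t. induction k as [|k IH]; intros t Hlen Ht; simpl.
  - destruct t; simpl in *; [auto|lia].
  - destruct t as [|i t]; [left; reflexivity|right]. inversion Ht; subst. simpl in Hlen.
    apply in_flat_map. exists t. split; [apply IH; auto; lia|].
    apply in_map_iff. exists i. split; [reflexivity|apply in_seq; lia].
Qed.

Lemma bool_pigeonhole {A : Type} (eq_dec : forall a b : A, {a = b} + {a <> b}) (D : list A) :
  forall Q : nat -> (A -> bool) -> Prop,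
  (forall P P' k, (forall t, In t D -> P t = P' t) -> Q k P -> Q k P') ->
  (forall k k' P, (k <= k')%nat -> Q k' P -> Q k P) ->
  (forall k, exists P, Q k P) -> exists P, forall k, Q k P.
Proof.
  induction D as [|a D IH]; intros Q Hresp Hmono Hall.
  - destruct (Hall 0%nat) as [P0 _]. exists P0. intros k. destruct (Hall k) as [P HP].
    eapply Hresp; [|exact HP]. intros t [].
  - set (fix_at := fun (b : bool) (P : A -> bool) t => if eq_dec t a then b else P t).
    set (Qb := fun b k P => Q k (fix_at b P)).
    assert (Hrespb : forall b P P' k, (forall t, In t D -> P t = P' t) -> Qb b k P -> Qb b k P').
    { intros b P P' k Hag. apply Hresp. intros t Ht. unfold fix_at.
      destruct (eq_dec t a); [reflexivity|]. destruct Ht; [congruence|auto]. }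
    assert (Hmonob : forall b k k' P, (k <= k')%nat -> Qb b k' P -> Qb b k P).
    { intros b k k' P Hk. apply Hmono, Hk. }
    assert (Hfix : forall P k, Q k P -> Qb (P a) k P).
    { intros P k HQ. eapply Hresp; [|exact HQ]. intros t _. unfold fix_at.
      destruct (eq_dec t a); subst; reflexivity. }
    destruct (classic (forall k, exists P, Qb true k P)) as [Htrue|Hfalse].
    + destruct (IH (Qb true) (Hrespb true) (Hmonob true) Htrue) as [P HP].
      exists (fix_at true P). exact HP.
    + apply not_all_ex_not in Hfalse. destruct Hfalse as [k0 Hk0].
      assert (Hall_false : forall k, exists P, Qb false k P).
      { intros k. destruct (Hall (Nat.max k k0)) as [P HP]. exists P.
        pose proof (Hfix P _ HP) as Hb. destruct (P a).
        - exfalso. apply Hk0. exists P. eapply Hmonob; [|exact Hb]. lia.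
        - eapply Hmonob; [|exact Hb]. lia. }
      destruct (IH (Qb false) (Hrespb false) (Hmonob false) Hall_false) as [P HP].
      exists (fix_at false P). exact HP.
Qed.

Fixpoint modal_depth (phi : form) : nat :=
  match phi with
  | Var _ | Bot | Top => 0%nat
  | And a b | Or a b | Prod a b | Imp a b => Nat.max (modal_depth a) (modal_depth b)
  | Box a | Dia a => S (modal_depth a)
  end.

Fixpoint form_size (phi : form) : nat :=
  match phi with
  | Var _ | Bot | Top => 1%nat
  | And a b | Or a b | Prod a b | Imp a b => S (form_size a + form_size b)
  | Box a | Dia a => S (form_size a)
  end.

Fixpoint subformulas (phi : form) : list form :=
  match phi with
  | Var _ | Bot | Top => phi :: nil
  | And a b | Or a b | Prod a b | Imp a b => phi :: subformulas a ++ subformulas b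
  | Box a | Dia a => phi :: subformulas a
  end.

Lemma luk_prod_lipschitz a b c d :
  Rabs (luk_prod a b - luk_prod c d) <= Rabs (a - c) + Rabs (b - d).
Proof. unfold luk_prod, Rmax, Rabs; repeat destruct Rle_dec; repeat destruct Rcase_abs; lra. Qed.

Lemma luk_imp_lipschitz a b c d :
  Rabs (luk_imp a b - luk_imp c d) <= Rabs (a - c) + Rabs (b - d).
Proof. unfold luk_imp, Rmin, Rabs; repeat destruct Rle_dec; repeat destruct Rcase_abs; lra. Qed.

Definition unravelling {W : Type} (Rel : W -> W -> Prop) (e : nat -> W -> R)
    (L : list form) (eps : R) (om : list nat -> W) : Prop :=
  forall s i, (exists u, Rel (om s) u) -> (i < length L)%nat ->
    Rel (om s) (om (i :: s)) /\
    (forall psi, nth_error L i = Some (Box psi) ->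
       eval Rel e psi (om (i :: s)) <= eval Rel e (Box psi) (om s) + eps) /\
    (forall psi, nth_error L i = Some (Dia psi) ->
       eval Rel e (Dia psi) (om s) - eps <= eval Rel e psi (om (i :: s))).

Section TreeApproximation.

Variables (W : Type) (Rel : W -> W -> Prop) (e : nat -> W -> R) (L : list form) (d : nat)
  (eps : R) (om : list nat -> W) (P : list nat -> bool) (x : nat -> R).
Hypotheses (e_unit : K_L W Rel e) (eps_ge0 : 0 <= eps) (x_unit : forall i, 0 <= x i <= 1)
  (om_unravelling : unravelling Rel e L eps om)
  (P_spec : forall s, P s = true <-> exists u, Rel (om s) u)
  (x_spec : forall s p, x (code s p) = e p (om s)).

Let T := tree_rel d (length L) P.

Lemma tree_unit : K_L (list nat) T (tree_val x).
Proof. intros p s. apply x_unit. Qed.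

Lemma tree_rel_child s i :
  (length s < d)%nat -> (exists u, Rel (om s) u) -> (i < length L)%nat -> T s (i :: s).
Proof.
  intros Hlen Hsucc Hi. exists i. split; [|reflexivity]. unfold kids.
  rewrite (proj2 (Nat.ltb_lt _ _) Hlen), (proj2 (P_spec s) Hsucc). apply in_seq. lia.
Qed.

Lemma tree_rel_inv s t :
  T s t -> exists i, (i < length L)%nat /\ (exists u, Rel (om s) u) /\ t = i :: s.
Proof.
  intros [i [Hi ->]]. unfold kids in Hi. destruct (P s) eqn:HP.
  - rewrite andb_true_r in Hi. destruct (Nat.ltb _ _); [|destruct Hi].
    apply in_seq in Hi. exists i. split; [lia|]. split; [apply P_spec, HP|reflexivity].
  - rewrite andb_false_r in Hi. destruct Hi.
Qed.

Lemma tree_no_succ s : ~ (exists u, Rel (om s) u) -> forall t, ~ T s t.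
Proof.
  intros Hnone t Ht. destruct (tree_rel_inv s t Ht) as [_ [_ [Hsucc _]]]. exact (Hnone Hsucc).
Qed.

Section Modal.

Variables (a : form) (s : list nat) (C : R).
Hypotheses (s_short : (length s < d)%nat) (C_ge0 : 0 <= C)
  (children_close : forall i, (i < length L)%nat ->
     Rabs (eval T (tree_val x) a (i :: s) - eval Rel e a (om (i :: s))) <= C * eps).

Lemma tree_box_approx : In (Box a) L ->
  Rabs (eval T (tree_val x) (Box a) s - eval Rel e (Box a) (om s)) <= (C + 1) * eps.
Proof.
  intros Hin. destruct (classic (exists u, Rel (om s) u)) as [Hsucc|Hnone].
  - destruct (In_nth_error _ _ Hin) as [i0 Hi0].
    assert (Hi0L : (i0 < length L)%nat) by (apply nth_error_Some; congruence).
    pose proof (eval_in_unit W Rel e e_unit (Box a) (om s)) as HB.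
    assert (Hlower : eval Rel e (Box a) (om s) - C * eps <= eval T (tree_val x) (Box a) s).
    { apply box_ge; [|nra]. intros t Ht. destruct (tree_rel_inv s t Ht) as [i [Hi [_ ->]]].
      pose proof (children_close i Hi) as Hclose. apply Rabs_le_between in Hclose.
      pose proof (box_le W Rel e e_unit a (om s) (om (i :: s))
                    (proj1 (om_unravelling s i Hsucc Hi))). lra. }
    pose proof (box_le _ T (tree_val x) tree_unit a s (i0 :: s)
                  (tree_rel_child s i0 s_short Hsucc Hi0L)).
    pose proof (proj1 (proj2 (om_unravelling s i0 Hsucc Hi0L)) a Hi0).
    pose proof (children_close i0 Hi0L) as Hclose. apply Rabs_le_between in Hclose.
    apply Rabs_le_between. nra.
  - rewrite (box_no_succ _ T _ a s (tree_no_succ s Hnone)), (box_no_succ W Rel e a (om s))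
      by (intros u Hu; apply Hnone; exists u; exact Hu).
    rewrite Rminus_diag, Rabs_R0. nra.
Qed.

Lemma tree_dia_approx : In (Dia a) L ->
  Rabs (eval T (tree_val x) (Dia a) s - eval Rel e (Dia a) (om s)) <= (C + 1) * eps.
Proof.
  intros Hin. destruct (classic (exists u, Rel (om s) u)) as [Hsucc|Hnone].
  - destruct (In_nth_error _ _ Hin) as [i0 Hi0].
    assert (Hi0L : (i0 < length L)%nat) by (apply nth_error_Some; congruence).
    pose proof (eval_in_unit W Rel e e_unit (Dia a) (om s)) as HD.
    assert (Hupper : eval T (tree_val x) (Dia a) s <= eval Rel e (Dia a) (om s) + C * eps).
    { apply dia_le; [|nra]. intros t Ht. destruct (tree_rel_inv s t Ht) as [i [Hi [_ ->]]].
      pose proof (children_close i Hi) as Hclose. apply Rabs_le_between in Hclose.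
      pose proof (dia_ge W Rel e e_unit a (om s) (om (i :: s))
                    (proj1 (om_unravelling s i Hsucc Hi))). lra. }
    pose proof (dia_ge _ T (tree_val x) tree_unit a s (i0 :: s)
                  (tree_rel_child s i0 s_short Hsucc Hi0L)).
    pose proof (proj2 (proj2 (om_unravelling s i0 Hsucc Hi0L)) a Hi0).
    pose proof (children_close i0 Hi0L) as Hclose. apply Rabs_le_between in Hclose.
    apply Rabs_le_between. nra.
  - rewrite (dia_no_succ _ T _ a s (tree_no_succ s Hnone)), (dia_no_succ W Rel e a (om s))
      by (intros u Hu; apply Hnone; exists u; exact Hu).
    rewrite Rminus_diag, Rabs_R0. nra.
Qed.

End Modal.

Lemma tree_approx phi : forall s,
  incl (subformulas phi) L -> (modal_depth phi + length s <= d)%nat ->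
  Rabs (eval T (tree_val x) phi s - eval Rel e phi (om s)) <= INR (form_size phi) * eps.
Proof.
  induction phi; intros s Hsub Hdepth; cbn [subformulas modal_depth form_size] in *;
    apply incl_cons_inv in Hsub; destruct Hsub as [Hin Hsub];
    try (apply incl_app_inv in Hsub; destruct Hsub as [Hsub1 Hsub2];
         specialize (IHphi1 s Hsub1 ltac:(lia)); specialize (IHphi2 s Hsub2 ltac:(lia));
         rewrite S_INR, plus_INR; cbn [eval]).
  - cbn [eval]. unfold tree_val. rewrite x_spec, Rminus_diag, Rabs_R0. simpl. lra.
  - eapply Rle_trans; [apply Rmin_lipschitz|lra].
  - eapply Rle_trans; [apply Rmax_lipschitz|lra].
  - eapply Rle_trans; [apply luk_prod_lipschitz|lra].
  - eapply Rle_trans; [apply luk_imp_lipschitz|lra].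
  - simpl. rewrite Rminus_diag, Rabs_R0. lra.
  - simpl. rewrite Rminus_diag, Rabs_R0. lra.
  - rewrite S_INR. apply tree_box_approx; [lia|apply pos_INR| |exact Hin].
    intros i _. apply IHphi; [exact Hsub|simpl; lia].
  - rewrite S_INR. apply tree_dia_approx; [lia|apply pos_INR| |exact Hin].
    intros i _. apply IHphi; [exact Hsub|simpl; lia].
Qed.

End TreeApproximation.

Lemma eps_witness W (Rel : W -> W -> Prop) e L eps w i :
  K_L W Rel e -> 0 < eps -> exists u, (exists u0, Rel w u0) ->
    Rel w u /\
    (forall psi, nth_error L i = Some (Box psi) ->
       eval Rel e psi u <= eval Rel e (Box psi) w + eps) /\
    (forall psi, nth_error L i = Some (Dia psi) ->
       eval Rel e (Dia psi) w - eps <= eval Rel e psi u).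
Proof.
  intros He Heps.
  destruct (classic (exists u0, Rel w u0)) as [[u0 Hu0]|Hnone]; [|exists w; contradiction].
  pose proof (eval_in_unit W Rel e He) as Hunit.
  destruct (nth_error L i) as [[| | | | | | |psi|psi]|];
    try (exists u0; intros _; split; [exact Hu0|split; intros; discriminate]).
  - destruct (inf01_approx (fun y => exists w', Rel w w' /\ y = eval Rel e psi w') 0 eps)
      as [Hgt|[y [[u [Hu ->]] Hy]]]; [intros y [w' [_ ->]]; apply Hunit|exact Heps| |].
    + exists u0. intros _. split; [exact Hu0|]. split; [|discriminate].
      intros psi' E. injection E as <-. pose proof (Hunit psi u0). simpl. lra.
    + exists u. intros _. split; [exact Hu|]. split; [|discriminate].
      intros psi' E. injection E as <-. simpl. lra.
  - destruct (sup01_approx (fun y => exists w', Rel w w' /\ y = eval Rel e psi w') 1 eps)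
      as [Hgt|[y [[u [Hu ->]] Hy]]]; [intros y [w' [_ ->]]; apply Hunit|exact Heps| |].
    + exists u0. intros _. split; [exact Hu0|]. split; [discriminate|].
      intros psi' E. injection E as <-. pose proof (Hunit psi u0). simpl. lra.
    + exists u. intros _. split; [exact Hu|]. split; [discriminate|].
      intros psi' E. injection E as <-. simpl. lra.
Qed.

Fixpoint unravel {W : Type} (v : W) (wit : W -> nat -> W) (s : list nat) : W :=
  match s with nil => v | i :: s' => wit (unravel v wit s') i end.

Lemma unravelling_exists W (Rel : W -> W -> Prop) e L eps v :
  K_L W Rel e -> 0 < eps -> exists om, om nil = v /\ unravelling Rel e L eps om.
Proof.
  intros He Heps.
  destruct (choice _ (fun wi : W * nat => eps_witness W Rel e L eps (fst wi) (snd wi) He Heps))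
    as [wit Hwit].
  exists (unravel v (fun w i => wit (w, i))). split; [reflexivity|].
  intros s i Hsucc _. exact (Hwit (_, i) Hsucc).
Qed.

(** * Countermodels over some MV_n *)

Section Completeness.

Variables (Gamma : list form) (phi : form) (W : Type) (Rel : W -> W -> Prop) (e : nat -> W -> R)
  (v : W).
Hypotheses (e_unit : K_L W Rel e) (Gamma_true : forall g, In g Gamma -> eval Rel e g v = 1)
  (phi_lt1 : eval Rel e phi v < 1).

Let L := flat_map subformulas (phi :: Gamma).
Let m := length L.
Let d := list_max (map modal_depth (phi :: Gamma)).
Let size := INR (list_sum (map form_size (phi :: Gamma))).
Let c := (eval Rel e phi v + 1) / 2.

Definition premise_term (P : list nat -> bool) : term :=
  term_min (map (fun g => tree_term d m P g nil) Gamma).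

Definition near_countermodel (k : nat) (P : list nat -> bool) : Prop :=
  exists x, in_cube (vars (premise_term P) ++ vars (tree_term d m P phi nil)) x /\
    1 - / (INR k + 1) <=
    Rmin (teval (premise_term P) x) (1 + c - teval (tree_term d m P phi nil) x).

Lemma tree_approx_root om P x eps chi :
  0 <= eps -> (forall i, 0 <= x i <= 1) -> om nil = v -> unravelling Rel e L eps om ->
  (forall s, P s = true <-> exists u, Rel (om s) u) -> (forall s p, x (code s p) = e p (om s)) ->
  In chi (phi :: Gamma) ->
  Rabs (teval (tree_term d m P chi nil) x - eval Rel e chi v) <= size * eps.
Proof.
  intros Heps Hx Hroot Hom HP Hxe Hchi. rewrite <- eval_tree, <- Hroot.
  eapply Rle_trans; [apply (tree_approx W Rel e L d eps om P x); auto|].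
  - intros psi Hpsi. apply in_flat_map. eauto.
  - simpl. rewrite Nat.add_0_r. apply le_list_max, in_map, Hchi.
  - apply Rmult_le_compat_r; [exact Heps|]. apply le_INR, le_list_sum, in_map, Hchi.
Qed.

Lemma near_countermodel_exists k : exists P, near_countermodel k P.
Proof.
  set (delta := / (INR k + 1)).
  assert (Hdelta : 0 < delta) by (apply Rinv_0_lt_compat; pose proof (pos_INR k); lra).
  assert (Hsize : 0 <= size) by apply pos_INR.
  set (eps := delta / (size + 1)).
  assert (Heps : 0 < eps) by (apply Rdiv_lt_0_compat; lra).
  assert (Hsize_eps : size * eps < delta).
  { unfold eps. apply (Rmult_lt_reg_r (size + 1)); [lra|].
    field_simplify; lra. }
  destruct (unravelling_exists W Rel e L eps v e_unit Heps) as [om [Hroot Hom]].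
  set (P := fun s => if excluded_middle_informative (exists u, Rel (om s) u) then true else false).
  assert (HP : forall s, P s = true <-> exists u, Rel (om s) u).
  { intros s. unfold P. destruct excluded_middle_informative; split; auto; discriminate. }
  destruct (extend_along_injective (fun sp => code (fst sp) (snd sp))
                                   (fun sp => e (snd sp) (om (fst sp))))
    as [x [Hxe Hx]].
  { intros [s p] [t q] H. simpl in H. apply code_inj in H. destruct H as [-> ->]. reflexivity. }
  { intros sp. apply e_unit. }
  assert (Hclose : forall chi, In chi (phi :: Gamma) ->
            Rabs (teval (tree_term d m P chi nil) x - eval Rel e chi v) < delta).
  { intros chi Hchi. eapply Rle_lt_trans; [|exact Hsize_eps].
    apply (tree_approx_root om); auto; [lra|]. intros s p. exact (Hxe (s, p)). }
  exists P, x. fold delta. split; [intros i _; apply Hx|]. apply Rmin_glb.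
  - unfold premise_term. rewrite teval_term_min. apply fold_Rmin_glb; [|lra].
    intros y Hy. apply in_map_iff in Hy. destruct Hy as [t [<- Ht]].
    apply in_map_iff in Ht. destruct Ht as [g [<- Hg]].
    pose proof (Hclose g (or_intror Hg)) as Hg'. apply Rabs_def2 in Hg'.
    rewrite Gamma_true in Hg' by exact Hg. lra.
  - pose proof (Hclose phi (or_introl eq_refl)) as Hphi. apply Rabs_def2 in Hphi.
    unfold c. lra.
Qed.

Lemma near_countermodel_uniform : exists P, forall k, near_countermodel k P.
Proof.
  apply (bool_pigeonhole (list_eq_dec Nat.eq_dec) (nodes_upto m d)).
  - intros P P' k Hagree [x Hx]. exists x.
    assert (Hsmall : forall t, small_node d m t -> P t = P' t).
    { intros t [Hlen Ht]. apply Hagree, in_nodes_upto; [lia|exact Ht]. }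
    assert (Hterm : forall chi, tree_term d m P chi nil = tree_term d m P' chi nil).
    { intros chi. apply tree_term_agree; [exact Hsmall|constructor]. }
    assert (Hprem : premise_term P = premise_term P').
    { unfold premise_term. f_equal. apply map_ext. exact Hterm. }
    rewrite <- Hprem, <- Hterm. exact Hx.
  - intros k k' P Hk [x [Hx Hle]]. exists x. split; [exact Hx|].
    enough (/ (INR k' + 1) <= / (INR k + 1)) by lra.
    apply Rinv_le_contravar; [pose proof (pos_INR k); lra|]. apply le_INR in Hk. lra.
  - exact near_countermodel_exists.
Qed.

Lemma exact_tree_countermodel : exists P x, (forall i, 0 <= x i <= 1) /\
  teval (premise_term P) x = 1 /\ teval (tree_term d m P phi nil) x < 1.
Proof.
  destruct near_countermodel_uniform as [P HP].
  set (G := premise_term P). set (F := tree_term d m P phi nil).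
  destruct (teval_lipschitz G) as [K1 [HK1 LG]]. destruct (teval_lipschitz F) as [K2 [HK2 LF]].
  destruct (lipschitz_sup_attained (vars G ++ vars F)
              (fun x => Rmin (teval G x) (1 + c - teval F x)) (K1 + K2)) as [xs [Hcube Hxs]];
    [lra| |exact HP|].
  { intros x y. eapply Rle_trans; [apply Rmin_lipschitz|]. rewrite dist_on_app.
    specialize (LG x y). specialize (LF x y).
    pose proof (dist_on_ge0 (vars G) x y). pose proof (dist_on_ge0 (vars F) x y).
    replace (1 + c - teval F x - (1 + c - teval F y)) with (- (teval F x - teval F y)) by ring.
    rewrite Rabs_Ropp. nra. }
  set (xc := fun i => Rmax 0 (Rmin 1 (xs i))).
  assert (Hagree : forall i, In i (vars G ++ vars F) -> xc i = xs i).
  { intros i Hi. specialize (Hcube i Hi). unfold xc.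
    rewrite Rmin_right by lra. apply Rmax_right. lra. }
  assert (HG : teval G xc = teval G xs) by (apply teval_ext; intros; apply Hagree, in_or_app; auto).
  assert (HF : teval F xc = teval F xs) by (apply teval_ext; intros; apply Hagree, in_or_app; auto).
  assert (HG1 : teval G xs <= 1)
    by (unfold G, premise_term; rewrite teval_term_min; apply fold_Rmin_le1).
  assert (Hc : c < 1) by (unfold c; lra).
  cbv beta in Hxs. pose proof (Rmin_l (teval G xs) (1 + c - teval F xs)).
  pose proof (Rmin_r (teval G xs) (1 + c - teval F xs)).
  exists P, xc. fold G F. split; [|split; lra].
  intros i. unfold xc. unfold Rmax, Rmin. repeat destruct Rle_dec; lra.
Qed.

Lemma MV_tree_countermodel : exists P y, K_omegaL (list nat) (tree_rel d m P) (tree_val y) /\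
  (forall g, In g Gamma -> eval (tree_rel d m P) (tree_val y) g nil = 1) /\
  eval (tree_rel d m P) (tree_val y) phi nil < 1.
Proof.
  destruct exact_tree_countermodel as [P [x [Hx [HG HF]]]].
  set (G := premise_term P) in *. set (F := tree_term d m P phi nil) in *.
  destruct (term_system_MV_solution
              ((TAdd G (TOpp TOne), true) :: (TAdd TOne (TOpp F), false) :: nil) x)
    as [n [Hn [y [Hy Hsol]]]]; [exact Hx| |].
  { intros c' [<-|[<-|[]]]; unfold tsat; simpl; lra. }
  pose proof (Hsol _ (or_introl eq_refl)) as HGy.
  pose proof (Hsol _ (or_intror (or_introl eq_refl))) as HFy.
  unfold tsat in HGy, HFy. simpl in HGy, HFy. fold G in HGy. fold F in HFy.
  assert (HK : K_omegaL (list nat) (tree_rel d m P) (tree_val y))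
    by (exists n; split; auto; intros p s; apply Hy).
  exists P, y. split; [exact HK|]. split.
  - intros g Hg. apply Rle_antisym; [apply (eval_in_unit _ _ _ (K_omegaL_K_L _ _ _ HK))|].
    rewrite eval_tree. apply Rle_trans with (teval G y); [lra|].
    unfold G, premise_term. rewrite teval_term_min. apply fold_Rmin_lb.
    rewrite map_map. apply in_map_iff. eauto.
  - rewrite eval_tree. fold F. lra.
Qed.

End Completeness.

Lemma entails_K_L_of_K_omegaL Gamma phi : entails K_omegaL Gamma phi -> entails K_L Gamma phi.
Proof.
  intros Hent W Rel e He v HGamma. apply NNPP. intros Hne.
  assert (Hlt : eval Rel e phi v < 1) by (pose proof (eval_in_unit W Rel e He phi v); lra).
  destruct (MV_tree_countermodel Gamma phi W Rel e v He HGamma Hlt) as [P [y [HK [HG Hphi]]]].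
  specialize (Hent _ _ _ HK nil HG). lra.
Qed.

(** * The transitive case *)

Definition p0 := Var 0.

(* [~ Dia p -> Dia p], whose value is [min(1, 2 Dia p)]. *)
Definition double_dia := Imp (Imp (Dia p0) Bot) (Dia p0).

Definition halving_premises := Box (Imp p0 double_dia) :: Box (Imp double_dia p0) :: nil.

Definition dia_crisp := Or (Dia p0) (Imp (Dia p0) Bot).

Section Halving.

Variables (W : Type) (Rel : W -> W -> Prop) (e : nat -> W -> R).
Hypothesis e_unit : K_L W Rel e.

Lemma eval_double_dia u : eval Rel e double_dia u = Rmin 1 (2 * eval Rel e (Dia p0) u).
Proof.
  pose proof (eval_in_unit W Rel e e_unit (Dia p0) u).
  simpl in *. unfold luk_imp, Rmin in *. repeat destruct Rle_dec; lra.
Qed.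

Lemma eval_dia_crisp v :
  eval Rel e dia_crisp v = Rmax (eval Rel e (Dia p0) v) (1 - eval Rel e (Dia p0) v).
Proof.
  pose proof (eval_in_unit W Rel e e_unit (Dia p0) v).
  simpl in *. unfold luk_imp, Rmin. destruct Rle_dec; f_equal; lra.
Qed.

Lemma halving_successor v u :
  (forall g, In g halving_premises -> eval Rel e g v = 1) -> Rel v u ->
  e 0%nat u = Rmin 1 (2 * eval Rel e (Dia p0) u).
Proof.
  intros Hprem Hvu.
  assert (Himp : forall a b, In (Box (Imp a b)) halving_premises ->
                   eval Rel e a u <= eval Rel e b u).
  { intros a b Hab. pose proof (box_eq1 W Rel e e_unit _ v u (Hprem _ Hab) Hvu) as H.
    simpl in H. unfold luk_imp, Rmin in H. destruct Rle_dec; lra. }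
  pose proof (Himp p0 double_dia (or_introl eq_refl)).
  pose proof (Himp double_dia p0 (or_intror (or_introl eq_refl))).
  rewrite eval_double_dia in *. simpl in *. lra.
Qed.

End Halving.

Lemma div_lt_nat a b n : 0 < INR n -> INR a / INR n < INR b / INR n -> (a < b)%nat.
Proof.
  intros Hn H. apply INR_lt. apply (Rmult_lt_reg_r (/ INR n)); [apply Rinv_0_lt_compat; lra|].
  exact H.
Qed.

(* In MV_n a positive value cannot be halved forever. *)
Lemma halving_crisp_MV W Rel e v u :
  K4_omegaL W Rel e -> (forall g, In g halving_premises -> eval Rel e g v = 1) -> Rel v u ->
  e 0%nat u = 0 \/ e 0%nat u = 1.
Proof.
  intros [[n [Hn HMV]] Htr] Hprem Hvu.
  assert (Hunit : K_L W Rel e) by (apply K_omegaL_K_L; exists n; auto).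
  assert (HnR : 1 <= INR n) by (apply le_INR in Hn; exact Hn).
  assert (Hdescent : forall j u,
            Rel v u -> e 0%nat u = INR j / INR n -> 0 < e 0%nat u < 1 -> False).
  { intros j. induction j as [j IH] using (well_founded_induction Wf_nat.lt_wf).
    intros u1 Hvu1 Hj Hu1.
    assert (Hhalf : e 0%nat u1 = 2 * eval Rel e (Dia p0) u1).
    { pose proof (halving_successor W Rel e Hunit v u1 Hprem Hvu1).
      unfold Rmin in *. destruct Rle_dec; lra. }
    destruct (classic (exists u2, Rel u1 u2 /\ 0 < e 0%nat u2)) as [[u2 [Hu12 Hpos]]|Hnone].
    - pose proof (dia_ge W Rel e Hunit p0 u1 u2 Hu12) as Hle. simpl in Hle.
      simpl in Hhalf. destruct (HMV 0%nat u2) as [j2 [_ Hj2]].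
      assert (Hlt : (j2 < j)%nat).
      { apply div_lt_nat with n; [lra|]. rewrite <- Hj, <- Hj2. lra. }
      apply (IH j2 Hlt u2); [eapply Htr; eauto|auto|lra].
    - assert (eval Rel e (Dia p0) u1 <= 0); [|lra].
      apply dia_le; auto; [|lra]. intros w Hw. simpl.
      destruct (Rle_dec (e 0%nat w) 0); auto. exfalso. apply Hnone. exists w. split; auto. lra. }
  destruct (HMV 0%nat u) as [j [Hjn Hj]].
  destruct (Rtotal_order (e 0%nat u) 0) as [Hlt|[Heq|Hgt]];
    pose proof (in_MV_unit n _ Hn (HMV 0%nat u)); [lra|auto|].
  destruct (Req_dec (e 0%nat u) 1); auto.
  exfalso. apply (Hdescent j u); auto. lra.
Qed.

Lemma halving_entails_crisp_MV : entails K4_omegaL halving_premises dia_crisp.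
Proof.
  intros W Rel e HK v Hprem.
  assert (Hunit : K_L W Rel e) by (apply K_omegaL_K_L, HK).
  rewrite eval_dia_crisp by exact Hunit.
  destruct (classic (exists u, Rel v u /\ e 0%nat u = 1)) as [[u [Hvu Hu]]|Hnone].
  - assert (Hd : eval Rel e (Dia p0) v = 1).
    { pose proof (dia_ge W Rel e Hunit p0 v u Hvu).
      pose proof (eval_in_unit W Rel e Hunit (Dia p0) v).
      simpl in *. lra. }
    rewrite Hd. apply Rmax_left. lra.
  - assert (Hd : eval Rel e (Dia p0) v <= 0).
    { apply dia_le; [|lra]. intros u Hvu. simpl.
      destruct (halving_crisp_MV W Rel e v u HK Hprem Hvu) as [H|H]; [lra|].
      exfalso. eauto. }
    pose proof (eval_in_unit W Rel e Hunit (Dia p0) v).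
    replace (eval Rel e (Dia p0) v) with 0 by lra. rewrite Rmax_right; lra.
Qed.

Lemma halving_not_entails_crisp : ~ entails K4_L halving_premises dia_crisp.
Proof.
  set (e := fun (_ : nat) (j : nat) => (1/2)^j).
  assert (Hpow : forall j, 0 < (1/2)^j <= 1) by (induction j; simpl; lra).
  assert (Hunit : K_L nat lt e) by (intros p j; specialize (Hpow j); unfold e; lra).
  assert (Hdia : forall j, eval lt e (Dia p0) j = (1/2)^(S j)).
  { intro j. apply Rle_antisym.
    - apply dia_le; [|left; apply Hpow]. intros w Hw.
      change ((1/2)^w <= (1/2)^(S j)).
      replace w with (S j + (w - S j))%nat by lia. rewrite pow_add.
      pose proof (Hpow (w - S j)%nat). pose proof (Hpow (S j)). nra.
    - apply (dia_ge nat lt e Hunit p0 j (S j)). lia. }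
  assert (Hp_fix : forall j, eval lt e double_dia j = e 0%nat j).
  { intro j. rewrite eval_double_dia, Hdia by exact Hunit. unfold e.
    pose proof (Hpow j). rewrite Rmin_right; simpl; lra. }
  intros Hent.
  assert (Hcrisp : eval lt e dia_crisp 0%nat = 1).
  { apply Hent; [split; [exact Hunit|intros a b c; lia]|].
    intros g Hg. apply Rle_antisym; [apply (eval_in_unit nat lt e Hunit)|].
    destruct Hg as [<-|[<-|[]]]; apply box_ge; try lra; intros u _; cbn [eval];
      rewrite Hp_fix; unfold luk_imp; rewrite Rmin_left; simpl; lra. }
  rewrite eval_dia_crisp, Hdia in Hcrisp by exact Hunit.
  simpl in Hcrisp. rewrite Rmax_left in Hcrisp; lra.
Qed.

Theorem corollary4p7 :
  (forall (Gamma : list form) (phi : form),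
      entails K_omegaL Gamma phi <-> entails K_L Gamma phi) /\
  (forall (Gamma : list form) (phi : form),
      entails K4_L Gamma phi -> entails K4_omegaL Gamma phi) /\
  (exists (Gamma : list form) (phi : form),
      entails K4_omegaL Gamma phi /\ ~ entails K4_L Gamma phi).
Proof.
  split; [|split].
  - intros Gamma phi. split; [apply entails_K_L_of_K_omegaL|].
    apply entails_antimono. exact K_omegaL_K_L.
  - intros Gamma phi. apply entails_antimono.
    intros W Rel e [HK Htr]. split; [apply K_omegaL_K_L, HK|exact Htr].
  - exists halving_premises, dia_crisp.
    split; [exact halving_entails_crisp_MV|exact halving_not_entails_crisp].
Qed.
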